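(* Let $M,K\in\mathbb{R}^{m\times m}$ be symmetric positive definite matrices, let $\nu>0$, $\omega>0$, $\theta=1+\nu\omega^2$, and let $H_1=\begin{pmatrix} M&0\\0&M\end{pmatrix}$, $H_2=\begin{pmatrix} K&0\\0&K\end{pmatrix}$ and \[ R=\frac{1}{\sqrt{\nu\theta}}\begin{pmatrix} -i\omega\nu I & \sqrt{\nu}\, I\\ -\sqrt{\nu}\, I & i\omega\nu I\end{pmatrix}, \] where $I$ is the $m\times m$ identity. For $\alpha>0$ define the MBAS iteration matrix \[ P_\alpha=(\alpha I_{2m}+\sqrt{\nu\theta}H_2)^{-1}(\alpha I_{2m}+\theta RH_1)(\alpha I_{2m}+\theta H_1)^{-1}(\alpha I_{2m}-\sqrt{\nu\theta}RH_2). \] Then for every $\alpha>0$, \[ \rho(P_\alpha)\le \eta_\alpha:=\max_{\lambda\in\sigma(M)}\frac{\sqrt{\alpha^2+\theta^2\lambda^2}}{\alpha+\theta\lambda}\;\max_{\mu\in\sigma(K)}\frac{\sqrt{\alpha^2+\nu\theta\mu^2}}{\alpha+\sqrt{\nu\theta}\,\mu}<1 . \] In particular the MBAS iteration $x^{(k+1)}=P_\alpha x^{(k)}+Q_\alpha\tilde b$ converges for every $\alpha>0$ and every initial guess.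
   Context: $\rho(\cdot)$ denotes the spectral radius and $\sigma(\cdot)$ the spectrum of a matrix. The MBAS iteration for the system $\tilde A x=\tilde b$, with $\tilde A=\theta H_1+\sqrt{\nu\theta}RH_2$, is: given $x^{(k)}$, solve $(\alpha I+\theta H_1)x^{(k+1/2)}=(\alpha I-\sqrt{\nu\theta}RH_2)x^{(k)}+\tilde b$ and then $(\alpha I+\sqrt{\nu\theta}H_2)x^{(k+1)}=(\alpha I+\theta RH_1)x^{(k+1/2)}-R\tilde b$; eliminating $x^{(k+1/2)}$ gives $x^{(k+1)}=P_\alpha x^{(k)}+Q_\alpha\tilde b$ with $Q_\alpha=\alpha(\alpha I+\sqrt{\nu\theta}H_2)^{-1}(I-R)(\alpha I+\theta H_1)^{-1}$. *)

From HB Require Import structures.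
From mathcomp Require Import all_boot all_order all_algebra.
From mathcomp Require Import complex polyrcf.
Set Implicit Arguments. Unset Strict Implicit. Unset Printing Implicit Defensive.
Import Order.TTheory GRing.Theory Num.Theory.
Local Open Scope ring_scope.

Definition sym_posdef (R : rcfType) (m : nat) (M : 'M[R]_m) : Prop :=
  M^T = M /\ forall x : 'rV[R]_m, x != 0 -> 0 < (x *m M *m x^T) 0 0.

Definition spectrumR (R : rcfType) (m : nat) (M : 'M[R]_m) : seq R :=
  rootsR (char_poly M).

(* max of f over the spectrum of a real matrix (f >= 0 in our uses) *)
Definition max_spec (R : rcfType) (m : nat) (M : 'M[R]_m) (f : R -> R) : R :=
  \big[Num.max/0]_(l <- spectrumR M) f l.

(* the complex eigenvalues (with multiplicity) of a complex square matrix: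
   the roots of its characteristic polynomial, which splits over R[i] *)
Definition eigenvalues_C (R : rcfType) (n : nat) (A : 'M[R[i]]_n) : seq R[i] :=
  sval (closed_field_poly_normal (char_poly A)).

(* spectral radius: max of moduli |z| (the library norm on R[i], a real number viewed in R via Re) *)
Definition spectral_radius (R : rcfType) (n : nat) (A : 'M[R[i]]_n) : R :=
  \big[Num.max/0]_(z <- eigenvalues_C A) complex.Re `|z|.

Definition cmx (R : rcfType) (m n : nat) (A : 'M[R]_(m, n)) : 'M[R[i]]_(m, n) :=
  map_mx (fun x => x%:C%C) A.

Definition H_of (R : rcfType) (m : nat) (M : 'M[R]_m) : 'M[R[i]]_(m + m) :=
  block_mx (cmx M) 0 0 (cmx M).

Definition Rmat (R : rcfType) (m : nat) (nu om : R) : 'M[R[i]]_(m + m) :=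
  let th := 1 + nu * om ^+ 2 in
  ((Num.sqrt (nu * th))^-1)%:C%C *:
    block_mx ((- ('i%C * (om * nu)%:C%C)) %:M) ((Num.sqrt nu)%:C%C %:M)
             ((- (Num.sqrt nu)%:C%C) %:M) (('i%C * (om * nu)%:C%C) %:M).

Definition P_alpha (R : rcfType) (m : nat) (M K : 'M[R]_m) (nu om alpha : R)
  : 'M[R[i]]_(m + m) :=
  let th := 1 + nu * om ^+ 2 in
  let s := Num.sqrt (nu * th) in
  let a := (alpha%:C%C)%:M : 'M[R[i]]_(m + m) in
  let H1 := H_of M in let H2 := H_of K in let Rm := Rmat m nu om in
  invmx (a + s%:C%C *: H2) *m (a + th%:C%C *: (Rm *m H1)) *m
  invmx (a + th%:C%C *: H1) *m (a - s%:C%C *: (Rm *m H2)).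

Definition eta_alpha (R : rcfType) (m : nat) (M K : 'M[R]_m) (nu om alpha : R) : R :=
  let th := 1 + nu * om ^+ 2 in
  max_spec M (fun l => Num.sqrt (alpha ^+ 2 + th ^+ 2 * l ^+ 2) / (alpha + th * l)) *
  max_spec K (fun mu => Num.sqrt (alpha ^+ 2 + nu * th * mu ^+ 2) /
                          (alpha + Num.sqrt (nu * th) * mu)).

From HB Require Import structures.
From mathcomp Require Import all_boot all_order all_algebra.
From mathcomp Require Import complex polyrcf spectral sesquilinear.
From mathcomp Require Import ring lra.
Set Implicit Arguments. Unset Strict Implicit. Unset Printing Implicit Defensive.
Import Order.TTheory GRing.Theory Num.Theory.
Local Open Scope ring_scope.

(* The MBAS iteration matrix
     P = B2^-1 A1 B1^-1 A2,   B1 = a + th H1,  A1 = a + th R H1,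
                             B2 = a + s H2,   A2 = a - s R H2,   s = sqrt(nu th),
   is a product of two "contractions relative to B_k": since R is a
   skew-hermitian square root of -1 commuting with the hermitian H_k, the
   cross terms of (a + b R H)^* (a + b R H) cancel, so
     |(a + b R H) t|^2 = t^* (a^2 + b^2 H^2) t <= c^2 t^* (a + b H)^2 t,
   which holds as soon as a^2 + b^2 l^2 <= c^2 (a + b l)^2 on the spectrum of H
   (diagonalize H unitarily).  For an eigenpair P x = z x, chaining the two
   estimates through y = B2 x gives |z| |y| <= c1 c2 |y|, hence the bound on
   the spectral radius; each factor c_k is < 1 because the spectra are positive. *)

Section Eigenvectors.
Variable F : fieldType.

(* An eigenvalue of [A] (defined through left eigenvectors) also has a right,
   i.e. column, eigenvector: [A - z] is singular, so its cokernel is nonzero. *)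
Lemma eigenvalue_colP n (A : 'M[F]_n) (z : F) : eigenvalue A z ->
  exists2 x : 'cV[F]_n, A *m x = z *: x & x != 0.
Proof.
rewrite /eigenvalue /eigenspace kermx_eq0 row_free_unit -row_full_unit.
rewrite -cokermx_eq0 => /eqP /matrixP ncoker.
have [j nzj] : exists j, col j (cokermx (A - z%:M)) != 0.
  apply/existsP; rewrite -negb_forall; apply/forallP => /= col0; apply: ncoker => i j.
  by have /eqP/matrixP/(_ i 0) := col0 j; rewrite !mxE.
exists (col j (cokermx (A - z%:M))) => //.
apply/eqP; rewrite -subr_eq0 -mul_scalar_mx -mulmxBl colE mulmxA mulmx_coker.
by rewrite mul0mx.
Qed.

Lemma shifted_unitmx n (A : 'M[F]_n) (a b : F) : b != 0 ->
  (a%:M + b *: A \in unitmx) = ~~ eigenvalue A (- (a / b)).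
Proof.
move=> b0; rewrite /eigenvalue /eigenspace kermx_eq0 row_free_unit negbK.
have -> : a%:M + b *: A = b *: (A - (- (a / b))%:M).
  by rewrite scalerBr scale_scalar_mx mulrN raddfN opprK mulrC divfK // addrC.
by rewrite unitmxZ // unitfE.
Qed.
End Eigenvectors.

Section HermitianForms.
Variable C : numClosedFieldType.
Local Open Scope sesquilinear_scope.

Definition sqnorm n (x : 'cV[C]_n) : C := (x^t* *m x) 0 0.

Lemma sqnorm_gt0 n (x : 'cV[C]_n) : x != 0 -> 0 < sqnorm x.
Proof.
move=> x0; have term_ge0 j : true -> 0 <= (x^t*) 0 j * x j 0.
  by move=> _; rewrite !mxE mulrC mul_conjC_ge0.
rewrite /sqnorm mxE lt0r sumr_ge0 ?andbT //; apply: contra x0 => /eqP sum0.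
apply/eqP/matrixP => j k; rewrite ord1 mxE.
have /eqP := psumr_eq0P term_ge0 sum0 (i := j) isT.
by rewrite !mxE mulrC mulf_eq0 conjC_eq0 orbb => /eqP.
Qed.

Lemma adjmxM m n p (A : 'M[C]_(m, n)) (B : 'M[C]_(n, p)) :
  (A *m B)^t* = B^t* *m A^t*.
Proof. by rewrite trmx_mul map_mxM. Qed.

Lemma adjmxD m n (A B : 'M[C]_(m, n)) : (A + B)^t* = A^t* + B^t*.
Proof. by rewrite linearD map_mxD. Qed.

Lemma adjmxZ m n (a : C) (A : 'M[C]_(m, n)) : (a *: A)^t* = a^* *: A^t*.
Proof. by rewrite linearZ map_mxZ. Qed.

Lemma sqnormZ n (z : C) (x : 'cV[C]_n) : sqnorm (z *: x) = `|z| ^+ 2 * sqnorm x.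
Proof.
by rewrite /sqnorm adjmxZ -scalemxAl -scalemxAr scalerA [in LHS]mxE normCK (mulrC z).
Qed.

Lemma adjmx_scalar n (a : C) : (a%:M : 'M[C]_n)^t* = (a^*)%:M.
Proof. by rewrite tr_scalar_mx map_scalar_mx. Qed.

Lemma hermitian_adj n (H : 'M[C]_n) : H \is hermsymmx -> H^t* = H.
Proof. by move/is_hermitianmxP => /= E; rewrite {2}E expr0 scale1r. Qed.

Lemma hermitian_spectral_decomp n (H : 'M[C]_n) : H \is hermsymmx ->
  H = (spectralmx H)^t* *m diag_mx (spectral_diag H) *m spectralmx H.
Proof.
move=> hH; have /orthomx_spectralP E := hermitian_normalmx hH.
by rewrite -invmx_unitary ?spectral_unitarymx.
Qed.

(* The diagonal entries of the spectral form of a normal matrix are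
   eigenvalues: the rows of [spectralmx A] are the eigenvectors. *)
Lemma spectral_diag_eigenvalue n (A : 'M[C]_n) (i : 'I_n) : A \is normalmx ->
  eigenvalue A (spectral_diag A 0 i).
Proof.
move=> /orthomx_spectralP EA; set P := spectralmx A.
have uP : P \is unitarymx := spectral_unitarymx A.
have EP : P *m A = diag_mx (spectral_diag A) *m P.
  by rewrite {1}EA -/P !mulmxA mulmxV ?unitarymx_unit // mul1mx.
apply/eigenvalueP; exists (row i P).
  by rewrite -row_mul EP row_mul row_diag_mx -scalemxAl -rowE.
rewrite rowE mul_mx_rowfree_eq0; last by rewrite row_free_unit unitarymx_unit.
by apply/eqP => /matrixP /(_ 0 i); rewrite !mxE !eqxx /= => /eqP; rewrite oner_eq0.
Qed.

Lemma quad_form_ge0 n (H : 'M[C]_n) (a b c : C) (t : 'cV[C]_n) :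
  H \is hermsymmx ->
  (forall i, 0 <= a + b * spectral_diag H 0 i + c * spectral_diag H 0 i ^+ 2) ->
  0 <= (t^t* *m (a%:M + b *: H + c *: (H *m H)) *m t) 0 0.
Proof.
move=> hH hd; set P := spectralmx H; set d := spectral_diag H.
have uP : P \is unitarymx := spectral_unitarymx H.
have PtP : P^t* *m P = 1%:M by rewrite -invmx_unitary // mulVmx ?unitarymx_unit.
have EH := hermitian_spectral_decomp hH; rewrite -/P -/d in EH.
set g := \row_i (a + b * d 0 i + c * d 0 i ^+ 2).
have Eg : a%:M + b *: H + c *: (H *m H) = P^t* *m diag_mx g *m P.
  have -> : diag_mx g = a%:M + b *: diag_mx d + c *: (diag_mx d *m diag_mx d).
    apply/matrixP => i j; rewrite mul_diag_mx !mxE.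
    by case: (eqVneq i j) => [->|_]; rewrite ?eqxx ?mulr1n ?expr2 // !mulr0n !mulr0 !addr0.
  have EH2 : H *m H = P^t* *m (diag_mx d *m diag_mx d) *m P.
    rewrite {1 2}EH !mulmxA -[_ *m P *m P^t*]mulmxA.
    by move/unitarymxP: uP => ->; rewrite mulmx1.
  rewrite !mulmxDr !mulmxDl mul_mx_scalar -scalemxAl PtP scalemx1.
  by rewrite -!scalemxAr -!scalemxAl -EH -EH2.
rewrite Eg !mulmxA; set u := P *m t.
have -> : t^t* *m P^t* *m diag_mx g *m P *m t = u^t* *m diag_mx g *m u.
  by rewrite /u adjmxM !mulmxA.
rewrite mul_mx_diag !mxE; apply: sumr_ge0 => j _; rewrite !mxE mulrC mulrA.
by apply: mulr_ge0; [exact: mul_conjC_ge0 | exact: hd].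
Qed.
(* [S] is a skew-hermitian square root of [-1] commuting with [H]; the
   matrix [R] of the MBAS splitting is such a root for [H1] and [H2]. *)
Definition commuting_skew_root n (S H : 'M[C]_n) : Prop :=
  [/\ S^t* = - S, S *m S = - 1%:M & S *m H = H *m S].

Lemma commuting_skew_rootN n (S H : 'M[C]_n) :
  commuting_skew_root S H -> commuting_skew_root (- S) H.
Proof.
move=> [hS hSS hSH]; split; first by rewrite linearN /= map_mxN hS.
  by rewrite mulNmx mulmxN opprK.
by rewrite mulNmx mulmxN hSH.
Qed.

Lemma gram_skew_shift n (H S : 'M[C]_n) (a b : C) :
  commuting_skew_root S H -> H^t* = H -> a^* = a -> b^* = b ->
  (a%:M + b *: (S *m H))^t* *m (a%:M + b *: (S *m H)) =
  (a ^+ 2)%:M + b ^+ 2 *: (H *m H).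
Proof.
move=> [hS hSS hSH] hH ha hb.
rewrite adjmxD adjmx_scalar adjmxZ adjmxM hH hS ha hb.
rewrite mulmxDl !mulmxDr mul_scalar_mx mul_mx_scalar scale_scalar_mx -expr2.
rewrite -!scalemxAl -!scalemxAr !scalerA mul_scalar_mx scalerA.
have -> : H *m - S *m (S *m H) = H *m H.
  by rewrite mulmxN mulNmx -mulmxA (mulmxA S) hSS mulNmx mul1mx mulmxN opprK.
rewrite mulmxN hSH (mulrC b a) scalerN -expr2 -!addrA; congr (_ + _).
by rewrite addrA addrN add0r.
Qed.

Lemma gram_shift n (H : 'M[C]_n) (a b : C) :
  H^t* = H -> a^* = a -> b^* = b ->
  (a%:M + b *: H)^t* *m (a%:M + b *: H) =
  (a ^+ 2)%:M + (2 * a * b) *: H + b ^+ 2 *: (H *m H).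
Proof.
move=> hH ha hb.
rewrite adjmxD adjmx_scalar adjmxZ hH ha hb.
rewrite mulmxDl !mulmxDr mul_scalar_mx mul_mx_scalar scale_scalar_mx -expr2.
rewrite -!scalemxAl -!scalemxAr !scalerA mul_scalar_mx scalerA -expr2 -!addrA.
congr (_ + _); rewrite addrA -scalerDl; congr (_ + _); congr (_ *: _).
by ring.
Qed.

Lemma sqnorm_contraction n (H S : 'M[C]_n) (a b c : C) (t : 'cV[C]_n) :
  H \is hermsymmx -> commuting_skew_root S H -> a^* = a -> b^* = b ->
  (forall i, let d := spectral_diag H 0 i in
     a ^+ 2 + b ^+ 2 * d ^+ 2 <= c ^+ 2 * (a + b * d) ^+ 2) ->
  sqnorm ((a%:M + b *: (S *m H)) *m t) <= c ^+ 2 * sqnorm ((a%:M + b *: H) *m t).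
Proof.
move=> hH hS ha hb hspec.
have hH' := hermitian_adj hH.
set A := a%:M + b *: (S *m H); set B := a%:M + b *: H.
have spec_ge0 i : let d := spectral_diag H 0 i in
    0 <= (c ^+ 2 - 1) * a ^+ 2 + (c ^+ 2 * (2 * a * b)) * d + ((c ^+ 2 - 1) * b ^+ 2) * d ^+ 2.
  move=> d; have -> : (c ^+ 2 - 1) * a ^+ 2 + (c ^+ 2 * (2 * a * b)) * d +
      ((c ^+ 2 - 1) * b ^+ 2) * d ^+ 2 =
      c ^+ 2 * (a + b * d) ^+ 2 - (a ^+ 2 + b ^+ 2 * d ^+ 2) by ring.
  by rewrite subr_ge0; exact: hspec.
have Egram : ((c ^+ 2 - 1) * a ^+ 2)%:M + (c ^+ 2 * (2 * a * b)) *: H +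
              ((c ^+ 2 - 1) * b ^+ 2) *: (H *m H) = c ^+ 2 *: (B^t* *m B) - A^t* *m A.
  rewrite /A /B gram_skew_shift // gram_shift //.
  by apply/matrixP => i j; rewrite !mxE; ring.
have := quad_form_ge0 t hH spec_ge0; rewrite Egram.
rewrite /sqnorm !adjmxM mulmxBr mulmxBl -scalemxAr -scalemxAl !mulmxA.
by rewrite !mxE subr_ge0.
Qed.

Lemma factored_eigenvalue_le n (A1 B1 A2 B2 : 'M[C]_n) (c1 c2 z : C) (x : 'cV[C]_n) :
  B1 \in unitmx -> B2 \in unitmx -> 0 <= c1 -> 0 <= c2 ->
  (forall t, sqnorm (A1 *m t) <= c1 ^+ 2 * sqnorm (B1 *m t)) ->
  (forall t, sqnorm (A2 *m t) <= c2 ^+ 2 * sqnorm (B2 *m t)) ->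
  invmx B2 *m A1 *m invmx B1 *m A2 *m x = z *: x -> x != 0 -> `|z| <= c1 * c2.
Proof.
move=> uB1 uB2 c1_ge0 c2_ge0 dom1 dom2 hx x0.
set y := B2 *m x; set t := invmx B1 *m (A2 *m x).
have y0 : y != 0 by apply: contraNneq x0 => y0; rewrite -(mulKmx uB2 x) -/y y0 mulmx0.
have A1t : A1 *m t = z *: y.
  by have := congr1 (mulmx B2) hx; rewrite -!mulmxA (mulKVmx uB2) -scalemxAr.
have B1t : B1 *m t = A2 *m x by rewrite /t (mulKVmx uB1).
have : `|z| ^+ 2 * sqnorm y <= (c1 * c2) ^+ 2 * sqnorm y.
  rewrite -sqnormZ -A1t exprMn -mulrA (le_trans (dom1 t)) // B1t.
  by rewrite ler_wpM2l ?exprn_ge0 ?dom2.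
rewrite ler_pM2r ?sqnorm_gt0 // ler_sqr ?nnegrE ?mulr_ge0 //.
Qed.
End HermitianForms.

Section MBASMatrices.
Variable R : rcfType.
Local Notation C := R[i].
Local Open Scope sesquilinear_scope.

Lemma conj_real_complex (x : R) : (x%:C%C : C)^* = x%:C%C.
Proof. exact: conjc_real. Qed.

Lemma cmx_adj m (X : 'M[R]_m) : (cmx X)^t* = cmx X^T.
Proof. by apply/matrixP => i j; rewrite !mxE conj_real_complex. Qed.

Lemma H_of_adj m (X : 'M[R]_m) : X^T = X -> (H_of X)^t* = H_of X.
Proof.
move=> hX; rewrite /H_of tr_block_mx map_block_mx !trmx0 !map_mx0.
by rewrite !cmx_adj hX.
Qed.

Lemma H_of_hermitian m (X : 'M[R]_m) : X^T = X -> H_of X \is hermsymmx.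
Proof. by move=> hX; apply/is_hermitianmxP; rewrite expr0 scale1r H_of_adj. Qed.

Lemma mul_scalar_block m (x y u v x' y' u' v' : C) :
  block_mx (x%:M : 'M_m) y%:M u%:M v%:M *m block_mx (x'%:M : 'M_m) y'%:M u'%:M v'%:M =
  block_mx (x * x' + y * u')%:M (x * y' + y * v')%:M
           (u * x' + v * u')%:M (u * y' + v * v')%:M.
Proof. by rewrite mulmx_block !mul_scalar_mx !scale_scalar_mx !raddfD. Qed.

Lemma adj_scalar_block m (x y u v : C) :
  (block_mx (x%:M : 'M_m) y%:M u%:M v%:M)^t* =
  block_mx (x^*)%:M (u^*)%:M (y^*)%:M (v^*)%:M.
Proof. by rewrite tr_block_mx map_block_mx !tr_scalar_mx !map_scalar_mx. Qed.

Lemma scalar_block_commute m (x y u v : C) (X : 'M[C]_m) :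
  block_mx x%:M y%:M u%:M v%:M *m block_mx X 0 0 X =
  block_mx X 0 0 X *m block_mx x%:M y%:M u%:M v%:M.
Proof.
by rewrite !mulmx_block !mulmx0 !mul0mx !addr0 !add0r !mul_scalar_mx !mul_mx_scalar.
Qed.

(* The matrix [R] of the splitting is a skew-hermitian square root of [-1]
   commuting with every block-diagonal [H_of X]; this uses
   [omega^2 nu^2 + nu = nu theta]. *)
Lemma Rmat_adj m (nu om : R) : (Rmat m nu om)^t* = - Rmat m nu om.
Proof.
have conj_i : ('i%C : C)^* = - 'i%C by apply/eqP; rewrite eq_complex /= oppr0 !eqxx.
rewrite /Rmat linearZ map_mxZ /= adj_scalar_block conj_real_complex -scalerN.
congr (_ *: _); rewrite opp_block_mx -!raddfN /=.
by congr block_mx; congr (_%:M); rewrite ?rmorphN ?rmorphM /= ?conj_i ?conj_real_complex ?opprK //; ring.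
Qed.

Lemma Rmat_sqr m (nu om : R) : 0 < nu -> Rmat m nu om *m Rmat m nu om = - 1%:M.
Proof.
move=> nu_gt0; set th := 1 + nu * om ^+ 2.
have th_gt0 : 0 < th by rewrite ltr_pwDl // mulr_ge0 ?sqr_ge0 ?ltW.
set s := Num.sqrt (nu * th).
have s2 : s ^+ 2 = nu * th by rewrite sqr_sqrtr // ltW // mulr_gt0.
have sqrt_nu2 : Num.sqrt nu ^+ 2 = nu by rewrite sqr_sqrtr // ltW.
have normalized : s^-1 * s^-1 * ((om * nu) ^+ 2 + Num.sqrt nu ^+ 2) = 1.
  by rewrite sqrt_nu2 -expr2 exprVn s2 /th; field; rewrite !gt_eqF.
have := congr1 (real_complex R) normalized.
rewrite !rmorphM rmorphD !rmorphXn /= rmorph1 => normalizedC.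
rewrite /Rmat -/th -/s -scalemxAl -scalemxAr scalerA mul_scalar_block.
set I := 'i%C; set w := ((om * nu)%:C)%C; set q := ((Num.sqrt nu)%:C)%C.
have I2 : I * I = -1 by rewrite -expr2 sqr_i.
have -> : - (I * w) * - (I * w) + q * - q = - (w ^+ 2 + q ^+ 2) + w ^+ 2 * (I * I + 1) by ring.
have -> : - q * q + I * w * (I * w) = - (w ^+ 2 + q ^+ 2) + w ^+ 2 * (I * I + 1) by ring.
have -> : - (I * w) * q + q * (I * w) = 0 by ring.
have -> : - q * - (I * w) + I * w * - q = 0 by ring.
rewrite I2 addNr mulr0 addr0 raddf0 -scalar_mx_block scale_scalar_mx.
by rewrite mulrN -[in RHS]raddfN /= -normalizedC /w /q rmorphM.
Qed.

Lemma Rmat_commuting_skew_root m (nu om : R) (X : 'M[R]_m) : 0 < nu ->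
  commuting_skew_root (Rmat m nu om) (H_of X).
Proof.
move=> nu_gt0; split; [exact: Rmat_adj | exact: Rmat_sqr |].
by rewrite /Rmat -scalemxAl -scalemxAr /H_of scalar_block_commute.
Qed.
End MBASMatrices.

Section MBASSpectra.
Variable R : rcfType.
Local Notation C := R[i].

Lemma eigenvalue_spectrumR m (X : 'M[R]_m) (l : R) :
  eigenvalue X l -> l \in spectrumR X.
Proof.
rewrite eigenvalue_root_char => hr.
have := roots_on_rootsR (monic_neq0 (char_poly_monic X)) l.
by rewrite /spectrumR in_itv /= hr => <-.
Qed.

Lemma spectrumR_eigenvalue m (X : 'M[R]_m) (l : R) :
  l \in spectrumR X -> eigenvalue X l.
Proof.
rewrite eigenvalue_root_char; apply: roots_on_root.
exact: roots_on_rootsR (monic_neq0 (char_poly_monic X)).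
Qed.

Lemma posdef_eigenvalue_gt0 m (X : 'M[R]_m) (l : R) :
  sym_posdef X -> eigenvalue X l -> 0 < l.
Proof.
move=> [_ posX] /eigenvalueP [x hx x0].
have := posX x x0; rewrite hx -scalemxAl mxE.
have xxT_ge0 : 0 <= (x *m x^T) 0 0.
  by rewrite mxE; apply: sumr_ge0 => j _; rewrite mxE -expr2 sqr_ge0.
move=> prod_gt0; rewrite ltNge; apply/negP => l_le0.
by move: prod_gt0; rewrite ltNge mulr_le0_ge0.
Qed.

Lemma H_of_eigenvalue m (X : 'M[R]_m) (z : C) :
  eigenvalue (H_of X) z -> eigenvalue (cmx X) z.
Proof.
case/eigenvalueP => v hv v0.
rewrite -[v]hsubmxK /H_of mul_row_block !mulmx0 addr0 add0r scale_row_mx in hv.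
have [hl hr] := eq_row_mx hv.
move: v0; rewrite -[v]hsubmxK row_mx_eq0 negb_and => /orP [] w0; apply/eigenvalueP.
  by exists (lsubmx v).
by exists (rsubmx v).
Qed.

Lemma H_of_real_eigenvalue m (X : 'M[R]_m) (l : R) : sym_posdef X ->
  eigenvalue (H_of X) l%:C%C -> l \in spectrumR X /\ 0 < l.
Proof.
move=> posX /H_of_eigenvalue; rewrite /cmx -[map_mx _ X]/(map_mx (real_complex R) X).
rewrite eigenvalue_map => hl.
by split; [exact: eigenvalue_spectrumR | exact: posdef_eigenvalue_gt0 hl].
Qed.

Lemma spectral_diag_H_of m (X : 'M[R]_m) (i : 'I_(m + m)) : sym_posdef X ->
  exists2 l : R, spectral_diag (H_of X) 0 i = l%:C%C & l \in spectrumR X /\ 0 < l.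
Proof.
move=> posX; have hH := H_of_hermitian (proj1 posX).
set d := spectral_diag (H_of X) 0 i.
have d_real : d = (complex.Re d)%:C%C.
  have /mxOverP d_real := hermitian_spectral_diag_real hH.
  by rewrite RRe_real // d_real.
exists (complex.Re d) => //; apply: H_of_real_eigenvalue => //.
by rewrite -d_real spectral_diag_eigenvalue // hermitian_normalmx.
Qed.

(* [a + b H_of X] is invertible for [a, b > 0]: its spectrum stays away
   from [0]. *)
Lemma H_of_shift_unitmx m (X : 'M[R]_m) (a b : R) : sym_posdef X -> 0 < a -> 0 < b ->
  (a%:C%C%:M + b%:C%C *: H_of X) \in unitmx.
Proof.
move=> posX a_gt0 b_gt0; have b0 : b%:C%C != 0 :> C by rewrite eq_complex /= negb_and gt_eqF.
rewrite shifted_unitmx // -fmorph_div -rmorphN; apply/negP.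
move/(H_of_real_eigenvalue posX) => [_]; rewrite oppr_gt0.
by rewrite ltNge divr_ge0 // ltW.
Qed.

Lemma H_of_contraction m (X : 'M[R]_m) (S : 'M[C]_(m + m)) (a b c : R)
    (t : 'cV[C]_(m + m)) :
  sym_posdef X -> commuting_skew_root S (H_of X) ->
  (forall l, l \in spectrumR X -> a ^+ 2 + b ^+ 2 * l ^+ 2 <= c ^+ 2 * (a + b * l) ^+ 2) ->
  sqnorm ((a%:C%C%:M + b%:C%C *: (S *m H_of X)) *m t) <=
  c%:C%C ^+ 2 * sqnorm ((a%:C%C%:M + b%:C%C *: H_of X) *m t).
Proof.
move=> posX hS hspec; apply: sqnorm_contraction;
  rewrite ?conj_real_complex ?H_of_hermitian //; first exact: proj1 posX.
move=> i /=; have [l -> [hl _]] := spectral_diag_H_of i posX.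
by rewrite -!rmorphXn -!rmorphM -!rmorphD -rmorphXn -rmorphM lecR hspec.
Qed.
End MBASSpectra.

Section ConvergenceFactors.
Variable R : rcfType.

(* The one-dimensional convergence factor [|a + i b l| / (a + b l)]. *)
Definition ratio (a b l : R) : R := Num.sqrt (a ^+ 2 + b ^+ 2 * l ^+ 2) / (a + b * l).

Lemma ratio_ge0_lt1 (a b l : R) : 0 < a -> 0 < b -> 0 < l ->
  0 <= ratio a b l /\ ratio a b l < 1.
Proof.
move=> a_gt0 b_gt0 l_gt0; have den_gt0 : 0 < a + b * l by rewrite addr_gt0 ?mulr_gt0.
split; first by rewrite divr_ge0 ?sqrtr_ge0 ?ltW.
rewrite /ratio ltr_pdivrMr // mul1r -[X in _ < X]ger0_norm ?ltW // -sqrtr_sqr.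
rewrite ltr_sqrt ?exprn_gt0 //.
have : 0 < 2 * a * (b * l) by rewrite !mulr_gt0.
by rewrite sqrrD exprMn; lra.
Qed.

Lemma max_spec_ratio m (X : 'M[R]_m) (a b : R) :
  sym_posdef X -> 0 < a -> 0 < b ->
  [/\ 0 <= max_spec X (ratio a b), max_spec X (ratio a b) < 1 &
   forall l, l \in spectrumR X ->
     a ^+ 2 + b ^+ 2 * l ^+ 2 <= max_spec X (ratio a b) ^+ 2 * (a + b * l) ^+ 2].
Proof.
move=> posX a_gt0 b_gt0; set g := ratio a b.
have spec_gt0 l : l \in spectrumR X -> 0 < l.
  by move/spectrumR_eigenvalue; apply: posdef_eigenvalue_gt0.
have g01 l : l \in spectrumR X -> 0 <= g l /\ g l < 1.
  by move=> hl; apply: ratio_ge0_lt1 => //; apply: spec_gt0.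
have max_ge0 : 0 <= max_spec X g.
  rewrite /max_spec big_seq; apply: (big_ind (fun r => 0 <= r)) => //.
    by move=> x y hx hy; rewrite le_max hx.
  by move=> l /g01 [].
split => //.
  rewrite /max_spec big_seq; apply: (big_ind (fun r => r < 1)) => //.
    by move=> x y hx hy; rewrite gt_max hx hy.
  by move=> l /g01 [].
move=> l hl; have l_gt0 := spec_gt0 l hl.
have den_gt0 : 0 < a + b * l by rewrite addr_gt0 ?mulr_gt0.
have : ratio a b l ^+ 2 <= max_spec X g ^+ 2.
  rewrite ler_sqr ?nnegrE //; last by case: (g01 l hl).
  exact: le_bigmax_seq.
rewrite /ratio expr_div_n sqr_sqrtr ?ler_pdivrMr ?exprn_gt0 //.
by apply: addr_ge0; [|apply: mulr_ge0]; exact: sqr_ge0.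
Qed.

Lemma eta_alphaE m (M K : 'M[R]_m) (nu om a : R) : 0 < nu ->
  let th := 1 + nu * om ^+ 2 in
  eta_alpha M K nu om a = max_spec M (ratio a th) * max_spec K (ratio a (Num.sqrt (nu * th))).
Proof.
move=> nu_gt0 th; have th_gt0 : 0 < th by rewrite ltr_pwDl // mulr_ge0 ?sqr_ge0 ?ltW.
by rewrite /eta_alpha -/th -{1}[nu * th]sqr_sqrtr // ltW // mulr_gt0.
Qed.

Lemma spectral_radius_le n (A : 'M[R[i]]_n) (c : R) : 0 <= c ->
  (forall z, eigenvalue A z -> `|z| <= c%:C%C) -> spectral_radius A <= c.
Proof.
move=> c_ge0 eig_le; rewrite /spectral_radius /eigenvalues_C.
case: closed_field_poly_normal => r /= char_r.
rewrite big_seq; apply: (big_ind (fun x => x <= c)) => //.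
  by move=> x y hx hy; rewrite ge_max hx hy.
move=> z hz; have /eig_le : eigenvalue A z.
  by rewrite eigenvalue_root_char char_r (monicP (char_poly_monic A)) scale1r root_prod_XsubC.
by rewrite lecE => /andP [].
Qed.
End ConvergenceFactors.

Unset Implicit Arguments.
Set Strict Implicit.

Theorem theorem1 (R : rcfType) (m : nat) (M K : 'M[R]_m) (nu om : R) :
  sym_posdef M -> sym_posdef K -> 0 < nu -> 0 < om ->
  forall alpha : R, 0 < alpha ->
    spectral_radius (P_alpha M K nu om alpha) <= eta_alpha M K nu om alpha /\
    eta_alpha M K nu om alpha < 1.
Proof.
move=> posM posK nu_gt0 _ a a_gt0; rewrite eta_alphaE //.
set th := 1 + nu * om ^+ 2; set s := Num.sqrt (nu * th).
have th_gt0 : 0 < th by rewrite ltr_pwDl // mulr_ge0 ?sqr_ge0 ?ltW.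
have s_gt0 : 0 < s by rewrite sqrtr_gt0 mulr_gt0.
have [c1_ge0 c1_lt1 c1_spec] := max_spec_ratio posM a_gt0 th_gt0.
have [c2_ge0 c2_lt1 c2_spec] := max_spec_ratio posK a_gt0 s_gt0.
have RH X := @Rmat_commuting_skew_root R m nu om X nu_gt0.
split; last by rewrite (le_lt_trans (ler_piMr _ (ltW c2_lt1))) ?mulr_ge0.
apply: spectral_radius_le; first exact: mulr_ge0.
move=> z /eigenvalue_colP [x Px x0]; rewrite rmorphM.
apply: (factored_eigenvalue_le _ _ _ _ _ _ Px x0); rewrite ?ler0c //.
- exact: H_of_shift_unitmx.
- exact: H_of_shift_unitmx.
- by move=> t; apply: H_of_contraction.
- move=> t; rewrite -scalerN -mulNmx.
  exact: H_of_contraction (commuting_skew_rootN (RH K)) c2_spec.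
Qed.
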